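(* Let $n\ge 4$ be an integer, let $i,k\in\{1,\ldots,n\}$, and let $H\sim\text{Hyp}(n,i,k)$ be such that $\mathbb{E}(H)\in [1, \min\{i,k\}-2]$ and $\frac{(n-i)(n-k)}{n}>1$. Assume further that $\text{Var}(H)\ge 1$. Then $\mathbb{P}(H\ge \mathbb{E}(H)) \ge 0.049$.
   Context: $\text{Hyp}(n,i,k)$ denotes the hypergeometric distribution: the number of black marbles in a sample without replacement of size $k$ from an urn with $i$ black and $n-i$ white marbles, i.e. $\mathbb{P}(H=j)=\binom{i}{j}\binom{n-i}{k-j}/\binom{n}{k}$. One has $\mathbb{E}(H)=ik/n$ and $\text{Var}(H)=k\cdot\frac{i}{n}\cdot\frac{n-i}{n}\cdot\frac{n-k}{n-1}$. *)

From mathcomp Require Import all_boot all_order all_algebra.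
Set Implicit Arguments. Unset Strict Implicit. Unset Printing Implicit Defensive.
Import Order.TTheory GRing.Theory Num.Theory.
Local Open Scope ring_scope.

(* Hyp(n,i,k): number of black marbles in a sample of size k drawn without
   replacement from an urn with i black and n-i white marbles. *)
Definition hyp_pmf (R : fieldType) (n i k j : nat) : R :=
  ('C(i, j) * 'C(n - i, k - j))%:R / 'C(n, k)%:R.

Definition hyp_mean (R : fieldType) (n i k : nat) : R :=
  \sum_(j < k.+1) j%:R * hyp_pmf R n i k j.

Definition hyp_var (R : fieldType) (n i k : nat) : R :=
  \sum_(j < k.+1) (j%:R - hyp_mean R n i k) ^+ 2 * hyp_pmf R n i k j.

Definition hyp_tail_ge (R : realFieldType) (n i k : nat) (x : R) : R :=
  \sum_(j < k.+1 | x <= j%:R) hyp_pmf R n i k j.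

From mathcomp Require Import all_boot all_order all_algebra.
From mathcomp Require Import ring lra.
Set Implicit Arguments. Unset Strict Implicit. Unset Printing Implicit Defensive.
Import Order.TTheory GRing.Theory Num.Theory.

(* Let Y = H - E(H), s = E(Y^2), m = E(Y^4), p = P(Y >= 0) and a = E(max(Y, 0)),
   so that E|Y| = 2a because E(Y) = 0.  Cauchy-Schwarz on {Y >= 0} gives
   a^2 <= p s, and two more applications of it (through E|Y|^3) give
   s^3 <= (E|Y|)^2 m = 4 a^2 m; hence s^2 <= 4 p m.  The factorial moments
   E[H (H-1) ... (H-r+1)] = i^_r k^_r / n^_r give closed forms for s and m,
   from which m <= 5 s^2 as soon as s >= 1.  Thus p >= 1/20 > 0.049. *)

Lemma Vandermonde_ffact r l i k :
  (\sum_(j < k.+1) j ^_ r * 'C(i, j) * 'C(l, k - j)) * (i + l) ^_ r =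
  i ^_ r * k ^_ r * 'C(i + l, k).
Proof.
elim: r i k => [|r IHr] i k.
  under eq_bigr do rewrite ffactn0 mul1n.
  by rewrite binomial.Vandermonde !ffactn0 !muln1 mul1n.
case: k => [|k]; first by rewrite big_ord1 !ffact0n /= !(mul0n, muln0).
case: i => [|i].
  by rewrite big1 ?mul0n // => -[[|j] ?] _; rewrite ?ffact0n ?bin0n /= ?(mul0n, muln0).
rewrite big_ord_recl ffact0n mul0n add0n.
have -> : \sum_(j < k.+1)
      (bump 0 j) ^_ r.+1 * 'C(i.+1, bump 0 j) * 'C(l, k.+1 - bump 0 j)
    = i.+1 * \sum_(j < k.+1) j ^_ r * 'C(i, j) * 'C(l, k - j).
  rewrite big_distrr; apply: eq_bigr => j _.
  rewrite /bump add1n subSS ffactSS [j.+1 * _]mulnC -(mulnA (j ^_ r)) -mul_bin_diag /=.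
  by rewrite mulnCA !mulnA.
rewrite addSn !ffactSS.
transitivity (i.+1 * i ^_ r * k ^_ r * (k.+1 * 'C((i + l).+1, k.+1))); last by ring.
rewrite -mul_bin_diag /=.
transitivity (i.+1 * (i + l).+1 * (i ^_ r * k ^_ r * 'C(i + l, k))); last by ring.
by rewrite -IHr; ring.
Qed.

Local Open Scope ring_scope.

Definition ffactr (R : pzRingType) (x : R) (r : nat) : R := \prod_(l < r) (x - l%:R).

Section FallingFactorial.
Variable R : pzRingType.
Implicit Types (x : R) (r : nat).

Lemma ffactr0 x : ffactr x 0 = 1.
Proof. exact: big_ord0. Qed.

Lemma ffactrS x r : ffactr x r.+1 = ffactr x r * (x - r%:R).
Proof. exact: big_ord_recr. Qed.

Lemma natr_ffact (m r : nat) : (m ^_ r)%:R = ffactr (m%:R : R) r.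
Proof.
elim: r => [|r IHr]; first by rewrite ffactr0.
rewrite ffactnSr ffactrS natrM -IHr.
have [ler|ltmr] := leqP r m; first by rewrite natrB.
by rewrite ffact_small // !mul0r.
Qed.

End FallingFactorial.

Section WeightedSums.
Variables (R : realFieldType) (I : finType).
Implicit Types (w y z : I -> R) (P : pred I).

Lemma weighted_cauchy_schwarz w P z : (forall j, 0 <= w j) ->
  (\sum_(j | P j) z j * w j) ^+ 2 <=
  (\sum_(j | P j) w j) * \sum_(j | P j) z j ^+ 2 * w j.
Proof.
move=> w_ge0.
have : 0 <= \sum_(j | P j) \sum_(l | P l) (z j - z l) ^+ 2 * (w j * w l).
  by do 2![apply: sumr_ge0 => ? _]; rewrite mulr_ge0 ?sqr_ge0 ?mulr_ge0.
set p := \sum_(j | P j) w j; set s := \sum_(j | P j) z j * w j.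
set q := \sum_(j | P j) z j ^+ 2 * w j.
have -> : \sum_(j | P j) \sum_(l | P l) (z j - z l) ^+ 2 * (w j * w l) =
          q * p + p * q - 2 * s * s.
  transitivity (\sum_(j | P j) (z j ^+ 2 * w j * p + w j * q - 2 * (z j * w j) * s)).
    apply: eq_bigr => j _; rewrite /p /q /s !mulr_sumr -big_split -sumrB /=.
    by apply: eq_bigr => l _; ring.
  by rewrite sumrB big_split -!mulr_suml -mulr_sumr.
nra.
Qed.

Lemma weighted_sum_abs_centered w y : \sum_j y j * w j = 0 ->
  \sum_j `|y j| * w j = 2 * \sum_(j | 0 <= y j) y j * w j.
Proof.
rewrite (bigID (fun j => 0 <= y j)) /= => y_centered.
rewrite (bigID (fun j => 0 <= y j)) /=.
have -> : \sum_(j | 0 <= y j) `|y j| * w j = \sum_(j | 0 <= y j) y j * w j.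
  by apply: eq_bigr => j /ger0_norm ->.
have -> : \sum_(j | ~~ (0 <= y j)) `|y j| * w j = - \sum_(j | ~~ (0 <= y j)) y j * w j.
  rewrite -sumrN; apply: eq_bigr => j.
  by rewrite -ltNge => /ltr0_norm ->; rewrite mulNr.
lra.
Qed.

Lemma weighted_moment2_cube_le w y : (forall j, 0 <= w j) ->
  (\sum_j y j ^+ 2 * w j) ^+ 3 <=
  (\sum_j `|y j| * w j) ^+ 2 * \sum_j y j ^+ 4 * w j.
Proof.
move=> w_ge0.
set s := \sum_j y j ^+ 2 * w j; set A := \sum_j `|y j| * w j.
set m := \sum_j y j ^+ 4 * w j; set T := \sum_j `|y j| * (y j ^+ 2 * w j).
have sqr_normK j : `|y j| ^+ 2 = y j ^+ 2 by rewrite real_normK ?num_real.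
have s_le : s ^+ 2 <= A * T.
  have -> : s = \sum_j `|y j| * (`|y j| * w j).
    by apply: eq_bigr => j _; rewrite mulrA -expr2 sqr_normK.
  have -> : T = \sum_j `|y j| ^+ 2 * (`|y j| * w j).
    by apply: eq_bigr => j _; rewrite sqr_normK mulrCA.
  by apply: (weighted_cauchy_schwarz xpredT) => j; rewrite mulr_ge0.
have T_le : T ^+ 2 <= s * m.
  have -> : m = \sum_j `|y j| ^+ 2 * (y j ^+ 2 * w j).
    by apply: eq_bigr => j _; rewrite sqr_normK mulrA -exprD.
  by apply: (weighted_cauchy_schwarz xpredT) => j; rewrite mulr_ge0 ?sqr_ge0.
have s_ge0 : 0 <= s by apply: sumr_ge0 => j _; rewrite mulr_ge0 ?sqr_ge0.
have [->|s_neq0] := eqVneq s 0.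
  rewrite expr0n mulr_ge0 ?sqr_ge0 // sumr_ge0 // => j _.
  by rewrite mulr_ge0 // (exprM _ 2 2) sqr_ge0.
have s_gt0 : 0 < s by rewrite lt_def s_neq0.
have s4_le : s ^+ 2 * s ^+ 2 <= (A * T) * (A * T).
  by rewrite ler_pM ?sqr_ge0.
rewrite -(ler_pM2r s_gt0).
have := ler_wpM2l (sqr_ge0 A) T_le.
nra.
Qed.

Lemma weighted_centered_tail_bound w y :
  (forall j, 0 <= w j) -> \sum_j y j * w j = 0 ->
  (\sum_j y j ^+ 2 * w j) ^+ 2 <=
  4 * (\sum_(j | 0 <= y j) w j) * \sum_j y j ^+ 4 * w j.
Proof.
move=> w_ge0 y_centered.
have s3_le := weighted_moment2_cube_le y w_ge0.
rewrite weighted_sum_abs_centered // in s3_le.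
set s := \sum_j y j ^+ 2 * w j in s3_le *; set p := \sum_(j | 0 <= y j) w j.
set m := \sum_j y j ^+ 4 * w j in s3_le *.
set a := \sum_(j | 0 <= y j) y j * w j in s3_le.
have p_ge0 : 0 <= p by exact: sumr_ge0.
have m_ge0 : 0 <= m.
  by apply: sumr_ge0 => j _; rewrite mulr_ge0 // (exprM _ 2 2) sqr_ge0.
have s_ge0 : 0 <= s by apply: sumr_ge0 => j _; rewrite mulr_ge0 ?sqr_ge0.
have a2_le : a ^+ 2 <= p * s.
  apply: le_trans (weighted_cauchy_schwarz _ _ w_ge0) _.
  rewrite ler_wpM2l // [leRHS](bigID (fun j => 0 <= y j)) /= lerDl.
  by apply: sumr_ge0 => j _; rewrite mulr_ge0 ?sqr_ge0.
have [->|s_neq0] := eqVneq s 0; first by rewrite expr0n /= !mulr_ge0.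
have s_gt0 : 0 < s by rewrite lt_def s_neq0.
rewrite -(ler_pM2r s_gt0).
have := ler_wpM2r m_ge0 a2_le.
nra.
Qed.

End WeightedSums.

Lemma four_mul_sub_le_sqr (R : realDomainType) (x y : R) :
  4 * (x * (y - x)) <= y ^+ 2.
Proof.
by rewrite -subr_ge0 (_ : _ - _ = (y - 2 * x) ^+ 2) ?sqr_ge0 //; ring.
Qed.

Lemma hyp_kurtosis_poly_le (R : realFieldType) (N a b : R) :
  4 <= N -> 0 <= a -> 0 <= b -> 4 * a <= N ^+ 2 -> 4 * b <= N ^+ 2 ->
  N ^+ 2 * (N - 1) <= a * b ->
  N ^+ 2 * (N - 1) * (N * (N + 1) - 6 * a - 6 * b) + 6 * (a * b) * (5 * N - 6)
  <= 2 * (a * b) * ((N - 2) * (N - 3)).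
Proof.
move=> le4N a_ge0 b_ge0 aN bN abN.
rewrite -subr_ge0.
have -> : 2 * (a * b) * ((N - 2) * (N - 3)) -
    (N ^+ 2 * (N - 1) * (N * (N + 1) - 6 * a - 6 * b) + 6 * (a * b) * (5 * N - 6)) =
  (a * b - N ^+ 2 * (N - 1)) * (N * (N + 1)) +
  6 * (N - 1) * (a * (N ^+ 2 - 4 * b) + b * (N ^+ 2 - 4 * a)) +
  a * b * (N ^+ 2 + 7 * N) by ring.
have ab_ge0 : 0 <= a * b by exact: mulr_ge0.
have N_ge0 : 0 <= N by lra.
apply: addr_ge0; first apply: addr_ge0.
- by apply: mulr_ge0; rewrite ?subr_ge0 // mulr_ge0 //; lra.
- apply: mulr_ge0; first lra.
  by apply: addr_ge0; apply: mulr_ge0; rewrite // subr_ge0.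
- by apply: mulr_ge0; rewrite // addr_ge0 ?sqr_ge0 // mulr_ge0.
Qed.

Section HypergeometricMoments.
Variables (R : realFieldType) (n i k : nat).
Hypotheses (lein : (i <= n)%N) (lekn : (k <= n)%N).

Local Notation pmf := (hyp_pmf R n i k).
Local Notation mu := (hyp_mean R n i k).
Local Notation N := (n%:R : R).
Local Notation a := (i%:R * (N - i%:R)).
Local Notation b := (k%:R * (N - k%:R)).
Local Notation kurt_num :=
  (N ^+ 2 * (N - 1) * (N * (N + 1) - 6 * a - 6 * b) + 6 * (a * b) * (5 * N - 6)).

Lemma hyp_pmf_ge0 j : 0 <= pmf j.
Proof. by rewrite divr_ge0 ?ler0n. Qed.

Lemma hyp_ffact_moment r : (r <= n)%N ->
  \sum_(j < k.+1) ffactr j%:R r * pmf j =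
  ffactr i%:R r * ffactr k%:R r / ffactr n%:R r.
Proof.
move=> lern.
have binn_neq0 : 'C(n, k)%:R != 0 :> R by rewrite pnatr_eq0 -lt0n bin_gt0.
have ffactn_neq0 : (n ^_ r)%:R != 0 :> R by rewrite pnatr_eq0 -lt0n ffact_gt0.
apply: (mulIf binn_neq0); apply: (mulIf ffactn_neq0).
rewrite -!natr_ffact [in RHS]mulrAC divfK // /hyp_pmf.
under eq_bigr do rewrite -natr_ffact mulrA -natrM mulnA.
rewrite -mulr_suml divfK // -natr_sum -!natrM.
by have := Vandermonde_ffact r (n - i) i k; rewrite subnKC // => <-.
Qed.

Lemma hyp_pmf_sum1 : \sum_(j < k.+1) pmf j = 1.
Proof.
have := hyp_ffact_moment (leq0n n).
by rewrite !ffactr0 divr1 mulr1; under eq_bigr do rewrite ffactr0 mul1r.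
Qed.

Lemma hyp_meanE : (1 <= n)%N -> mu = i%:R * k%:R / n%:R.
Proof.
move=> le1n; have := hyp_ffact_moment le1n.
rewrite !ffactrS !ffactr0 !mul1r !subr0 => <-.
by apply: eq_bigr => j _; rewrite ffactrS ffactr0 mul1r subr0.
Qed.

Lemma hyp_expect_ffact_comb (c : seq R) : (size c <= n.+1)%N ->
  \sum_(j < k.+1) (\sum_(r < size c) c`_r * ffactr j%:R r) * pmf j =
  \sum_(r < size c) c`_r * (ffactr i%:R r * ffactr k%:R r / ffactr n%:R r).
Proof.
move=> lecn; under eq_bigr do rewrite mulr_suml.
rewrite exchange_big; apply: eq_bigr => r _.
under eq_bigr do rewrite -mulrA.
by rewrite -mulr_sumr hyp_ffact_moment // -ltnS (leq_trans (ltn_ord r)).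
Qed.

Lemma hyp_varE : (2 <= n)%N -> hyp_var R n i k = a * b / (N ^+ 2 * (N - 1)).
Proof.
move=> le2n; rewrite /hyp_var.
(* (x - mu)^2 in the basis of the falling factorials ffactr x r *)
pose c := [:: mu ^+ 2; 1 - 2 * mu; 1].
rewrite (eq_bigr (fun j : 'I_k.+1 =>
  (\sum_(r < size c) c`_r * ffactr j%:R r) * pmf j)) => [|j _]; last first.
  by rewrite !big_ord_recr big_ord0 /= !ffactrS ffactr0; congr (_ * _); ring.
rewrite hyp_expect_ffact_comb // !big_ord_recr big_ord0 /= !ffactrS !ffactr0.
rewrite hyp_meanE ?(ltnW le2n) //.
have le2N : 2%:R <= N by rewrite ler_nat.
by field; rewrite !gt_eqF //; lra.
Qed.

Lemma hyp_central_moment4E : (4 <= n)%N ->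
  \sum_(j < k.+1) (j%:R - mu) ^+ 4 * pmf j =
  3 * hyp_var R n i k ^+ 2 +
  hyp_var R n i k * kurt_num / (N ^+ 2 * (N - 1) * (N - 2) * (N - 3)).
Proof.
move=> le4n.
(* (x - mu)^4 in the basis of the falling factorials ffactr x r *)
pose c := [:: mu ^+ 4; 1 - 4 * mu + 6 * mu ^+ 2 - 4 * mu ^+ 3;
              7 - 12 * mu + 6 * mu ^+ 2; 6 - 4 * mu; 1].
rewrite (eq_bigr (fun j : 'I_k.+1 =>
  (\sum_(r < size c) c`_r * ffactr j%:R r) * pmf j)) => [|j _]; last first.
  by rewrite !big_ord_recr big_ord0 /= !ffactrS ffactr0; congr (_ * _); ring.
rewrite hyp_expect_ffact_comb // !big_ord_recr big_ord0 /= !ffactrS !ffactr0.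
rewrite hyp_varE ?hyp_meanE ?(leq_trans _ le4n) //.
have le4N : 4%:R <= N by rewrite ler_nat.
by field; rewrite !gt_eqF //; lra.
Qed.

Lemma hyp_central_moment4_le : (4 <= n)%N -> 1 <= hyp_var R n i k ->
  \sum_(j < k.+1) (j%:R - mu) ^+ 4 * pmf j <= 5 * hyp_var R n i k ^+ 2.
Proof.
move=> le4n var_ge1; rewrite hyp_central_moment4E //.
have N_ge4 : 4 <= N by rewrite (ler_nat R 4).
have varE := hyp_varE (leq_trans (isT : (2 <= 4)%N) le4n).
have P_gt0 : 0 < N ^+ 2 * (N - 1) by rewrite mulr_gt0 ?exprn_gt0 //; lra.
have Q_gt0 : 0 < N ^+ 2 * (N - 1) * (N - 2) * (N - 3) by rewrite !mulr_gt0 //; lra.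
have ab_ge : N ^+ 2 * (N - 1) <= a * b.
  by move: var_ge1; rewrite varE ler_pdivlMr // mul1r.
have a_ge0 : 0 <= a by rewrite mulr_ge0 ?subr_ge0 ?ler_nat.
have b_ge0 : 0 <= b by rewrite mulr_ge0 ?subr_ge0 ?ler_nat.
have kurt_le :
    kurt_num / (N ^+ 2 * (N - 1) * (N - 2) * (N - 3)) <= 2 * hyp_var R n i k.
  rewrite ler_pdivrMr // varE.
  rewrite (_ : 2 * _ * _ = 2 * (a * b) * ((N - 2) * (N - 3))); last first.
    by field; rewrite !gt_eqF //; lra.
  exact: hyp_kurtosis_poly_le (four_mul_sub_le_sqr _ _) (four_mul_sub_le_sqr _ _) ab_ge.
have := ler_wpM2l (le_trans ler01 var_ge1) kurt_le.
rewrite mulrA; lra.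
Qed.

Lemma hyp_var_sqr_le_tail :
  hyp_var R n i k ^+ 2 <=
  4 * hyp_tail_ge n i k mu * \sum_(j < k.+1) (j%:R - mu) ^+ 4 * pmf j.
Proof.
rewrite /hyp_tail_ge; under eq_bigl => j do rewrite -subr_ge0.
apply: weighted_centered_tail_bound => [j|]; first exact: hyp_pmf_ge0.
under eq_bigr do rewrite mulrBl.
by rewrite sumrB -mulr_sumr hyp_pmf_sum1 mulr1 subrr.
Qed.

End HypergeometricMoments.

Theorem corollary1 (R : realFieldType) (n i k : nat) :
  (4 <= n)%N -> (1 <= i <= n)%N -> (1 <= k <= n)%N ->
  1 <= hyp_mean R n i k ->
  hyp_mean R n i k <= (minn i k)%:R - 2 ->
  ((n - i) * (n - k))%:R / n%:R > 1 :> R ->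
  1 <= hyp_var R n i k ->
  hyp_tail_ge n i k (hyp_mean R n i k) >= 49 / 1000.
Proof.
(* Only Var(H) >= 1 is needed: the bounds on E(H) and (n-i)(n-k)/n are not. *)
move=> le4n /andP[_ lein] /andP[_ lekn] _ _ _ var_ge1.
have := hyp_var_sqr_le_tail R lein lekn.
have := hyp_central_moment4_le lein lekn le4n var_ge1.
set v := hyp_var R n i k; set t := hyp_tail_ge n i k _; set m4 := \sum_(j < _) _.
move=> m4_le tail_le.
have t_ge0 : 0 <= t by apply: sumr_ge0 => j _; exact: hyp_pmf_ge0.
have v2_gt0 : 0 < v ^+ 2 by rewrite exprn_gt0 // (lt_le_trans ltr01).
suff : v ^+ 2 * 1 <= v ^+ 2 * (20 * t) by rewrite ler_pM2l //; lra.
by have := ler_wpM2l t_ge0 m4_le; lra.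
Qed.
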